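(* Consider a discrete-time time-invariant closed-loop system $\mathbf{x}_{t+1}=f(\mathbf{x}_t,\pi(\mathbf{x}_t))$ with states constrained to $\mathcal{X}\subseteq\mathbb{R}^{n_x}$ and a target set $\mathcal{X}_T$, and let $\mathcal{P}_t$ ($t\le 0$) be the true backprojection sets. If there is a set $\bar{\mathcal{P}}_{-1}$ with $\mathcal{P}_{-1}\subseteq\bar{\mathcal{P}}_{-1}$ (a BP over-approximation at time $t=-1$) such that $\bar{\mathcal{P}}_{-1}\subseteq\mathcal{X}_T$, then $\mathcal{X}_T$ contains all BP sets, i.e. $\mathcal{P}_t\subseteq\mathcal{X}_T$ for all $t\le 0$, so that $\mathcal{X}_T$ is an invariant set.
   Context: True backprojection sets: $\mathcal{P}_0=\mathcal{X}_T$ and, for $t<0$, $\mathcal{P}_t=\{\mathbf{x}\in\mathcal{X}\mid f(\mathbf{x},\pi(\mathbf{x}))\in\mathcal{P}_{t+1}\}$. *)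

From mathcomp Require Import all_boot all_order all_algebra.
From mathcomp Require Import classical_sets reals.
Set Implicit Arguments. Unset Strict Implicit. Unset Printing Implicit Defensive.
Local Open Scope classical_set_scope.

(* The time index t <= 0 is
   encoded by k = -t : nat, i.e. BP f pi X XT k = P_{-k}:
     P_0 = XT,   P_{t} = { x in X | f(x, pi x) in P_{t+1} }. *)
Fixpoint BP (R : realType) (nx nu : nat)
    (f : 'rV[R]_nx -> 'rV[R]_nu -> 'rV[R]_nx) (pi : 'rV[R]_nx -> 'rV[R]_nu)
    (X XT : set 'rV[R]_nx) (k : nat) : set 'rV[R]_nx :=
  match k with
  | 0 => XT
  | k'.+1 => [set x | X x /\ BP f pi X XT k' (f x (pi x))]
  end.

From mathcomp Require Import all_boot all_order all_algebra.
From mathcomp Require Import classical_sets reals.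
Local Open Scope classical_set_scope.

(* One backward step P_t |-> P_{t-1} is monotone, so P_t <= XT gives
   P_{t-1} <= P_{-1} <= XT; induction on t finishes. *)

Section Backprojection.
Variables (R : realType) (nx nu : nat).
Variables (f : 'rV[R]_nx -> 'rV[R]_nu -> 'rV[R]_nx) (pi : 'rV[R]_nx -> 'rV[R]_nu).
Variables (X XT : set 'rV[R]_nx).

Local Notation P := (BP f pi X XT).

Lemma BPS_sub_BP1 k : P k `<=` XT -> P k.+1 `<=` P 1.
Proof. by move=> sPkXT x [Xx /sPkXT]. Qed.

Lemma BP_sub_target : P 1 `<=` XT -> forall k, P k `<=` XT.
Proof.
move=> sP1XT; elim=> [|k IHk] //.
exact: subset_trans (BPS_sub_BP1 k IHk) sP1XT.
Qed.

End Backprojection.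

Theorem mainTheorem3 (R : realType) (nx nu : nat)
    (f : 'rV[R]_nx -> 'rV[R]_nu -> 'rV[R]_nx) (pi : 'rV[R]_nx -> 'rV[R]_nu)
    (X XT : set 'rV[R]_nx) (Pbar1 : set 'rV[R]_nx) :
  BP f pi X XT 1 `<=` Pbar1 ->
  Pbar1 `<=` XT ->
  forall k : nat, BP f pi X XT k `<=` XT.
Proof.
move=> sP1Pbar sPbarXT.
exact: BP_sub_target (subset_trans sP1Pbar sPbarXT).
Qed.
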